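(* Let $k\ge 1$, let $A$ be a set of integers, each at least $3$, and let $O_k$ be the set of odd integers less than $2k+1$. Then, as $n\to\infty$, $$ex(n,C_{2k+1},\mathcal C_A)=\Theta\big(ex(n,C_{2k+1},\mathcal C_{A\setminus O_k})\big).$$
   Context: $C_k$ denotes the cycle with $k$ vertices; for a set $B$ of integers each at least 3, $\mathcal C_B=\{C_b:b\in B\}$. For a graph $H$ and a family of graphs $\mathcal F$, $ex(n,H,\mathcal F)$ is the maximum number of subgraphs isomorphic to $H$ in an $n$-vertex graph containing no member of $\mathcal F$ as a subgraph. *)

From mathcomp Require Import all_boot.
Set Implicit Arguments. Unset Strict Implicit. Unset Printing Implicit Defensive.

(* A simple graph on the vertex set 'I_n is encoded by an arbitrary
   g : {ffun 'I_n * 'I_n -> bool}; the edge relation is the symmetric,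
   irreflexive closure below.  Every simple graph arises this way. *)
Definition graph (n : nat) := {ffun 'I_n * 'I_n -> bool}.

Definition adj n (g : graph n) (x y : 'I_n) : bool :=
  (x != y) && (g (x, y) || g (y, x)).

Definition cycle_map n m (g : graph n) (f : {ffun 'I_m -> 'I_n}) : bool :=
  injectiveb f && [forall i : 'I_m, adj g (f i) (f (ordS i))].

Definition has_cycle n (g : graph n) (m : nat) : bool :=
  [exists f : {ffun 'I_m -> 'I_n}, cycle_map g f].

(* number of subgraphs of g isomorphic to C_m (m >= 3): the number of
   injective cyclic traversals divided by |Aut C_m| = 2m *)
Definition num_cycles n (g : graph n) (m : nat) : nat :=
  #|[set f : {ffun 'I_m -> 'I_n} | cycle_map g f]| %/ (2 * m).

(* g contains no member of C_B = {C_b : b in B}.  Cycles longer than n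
   cannot occur in an n-vertex graph, so it suffices to check b <= n. *)
Definition cycles_free n (g : graph n) (B : pred nat) : bool :=
  [forall b : 'I_n.+1, (nat_of_ord b \in B) ==> ~~ has_cycle g b].

Definition ex_cyc (n m : nat) (B : pred nat) : nat :=
  \max_(g : graph n | cycles_free g B) num_cycles g m.

Definition odd_below (k : nat) : pred nat := fun b => odd b && (b < k.*2.+1).

Definition setDpred (A O : pred nat) : pred nat := fun b => A b && ~~ O b.

Definition bigTheta (f g : nat -> nat) : Prop :=
  exists (C N : nat), forall n, N <= n -> f n <= C * g n /\ g n <= C * f n.

From mathcomp Require Import all_boot all_algebra.
From mathcomp Require Import zify.
Set Implicit Arguments. Unset Strict Implicit. Unset Printing Implicit Defensive.

Import GRing.Theory.

(* Colour the vertices of a C_{A \ O_k}-free graph G with m = 2k+1 colours and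
   keep only the edges whose endpoints get cyclically consecutive colours.
   Along a closed walk of the resulting subgraph the colour moves by +-1 mod m
   at each step, so the walk has as many up-steps as down-steps when it is
   shorter than m: the subgraph has no odd cycle shorter than m and is thus
   C_A-free.  A fixed copy of C_m survives for at least a fraction m^-m of the
   colourings (those colouring it 0, 1, ..., m-1 in order), so some colouring
   keeps at least that fraction of all copies.  The other inequality is
   monotonicity of ex in the forbidden family. *)

Lemma adjC n (g : graph n) x y : adj g x y = adj g y x.
Proof. by rewrite /adj eq_sym orbC. Qed.

Lemma cycle_map_sub n m (g h : graph n) (f : {ffun 'I_m -> 'I_n}) :
  (forall x y, adj h x y -> adj g x y) -> cycle_map h f -> cycle_map g f.
Proof.
move=> sub_hg /andP[inj_f /forallP adj_f].
by rewrite /cycle_map inj_f; apply/forallP => i; apply/sub_hg/adj_f.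
Qed.

Lemma ex_cyc_anti n m (A B : pred nat) :
  (forall b, B b -> A b) -> ex_cyc n m A <= ex_cyc n m B.
Proof.
move=> sub_BA; apply/bigmax_leqP => g /forallP freeA; apply: leq_bigmax_cond.
apply/forallP => b; apply/implyP => Bb.
by apply: (implyP (freeA b)); apply: sub_BA.
Qed.

Section ColorSubgraph.

Variables (n m : nat) (g : graph n) (c : {ffun 'I_n -> 'I_m}).

Definition ordS_adj (a b : 'I_m) := (b == ordS a) || (a == ordS b).

Definition color_subgraph : graph n :=
  [ffun p => adj g p.1 p.2 && ordS_adj (c p.1) (c p.2)].

Lemma adj_color_subgraph x y :
  adj color_subgraph x y = adj g x y && ordS_adj (c x) (c y).
Proof.
rewrite /adj !ffunE /adj /= [y == x]eq_sym /ordS_adj.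
by case: (x == y) (g (x, y)) (g (y, x)) (c y == _) (c x == _) => [] [] [] [] [].
Qed.

Lemma adj_color_subgraph_sub x y : adj color_subgraph x y -> adj g x y.
Proof. by rewrite adj_color_subgraph => /andP[]. Qed.

End ColorSubgraph.

Lemma sum_nat_bool_le l (b : 'I_l -> bool) : \sum_i (b i : nat) <= l.
Proof. by rewrite -[leqRHS]card_ord -sum1_card; apply: leq_sum => i _; case: b. Qed.

Lemma ordS_adj_closed_walk_even l m (a : 'I_l -> 'I_m) :
  (forall i, ordS_adj (a i) (a (ordS i))) -> l < m -> ~~ odd l.
Proof.
move=> step lt_lm.
pose up i := a (ordS i) == ordS (a i).
have step_mod i : a (ordS i) + ~~ up i = a i + up i %[mod m].
  have := step i; rewrite /ordS_adj /up.
  by case: eqP => [-> _ | _ /= /eqP ->]; rewrite addn0 modn_mod addn1.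
have sum_mod : \sum_i (a (ordS i) : nat) + \sum_i (~~ up i : nat) =
               \sum_i (a i : nat) + \sum_i (up i : nat) %[mod m].
  rewrite -!big_split /= -modn_summ -[RHS]modn_summ.
  by congr (_ %% _); apply: eq_bigr => i _; apply: step_mod.
have shift : \sum_i (a (ordS i) : nat) = \sum_i (a i : nat).
  by rewrite [RHS](reindex_inj (@ordS_inj l)).
move: sum_mod; rewrite shift => /eqP.
rewrite eqn_modDl !modn_small ?(leq_ltn_trans (sum_nat_bool_le _)) // => /eqP ups.
have <- : \sum_i (up i : nat) + \sum_i (~~ up i : nat) = l.
  rewrite -big_split /= -[RHS]card_ord -sum1_card.
  by apply: eq_bigr => i _; case: (up i).
by rewrite ups addnn odd_double.
Qed.

Lemma color_subgraph_no_short_odd_cycle n m (g : graph n)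
    (c : {ffun 'I_n -> 'I_m}) l :
  odd l -> l < m -> ~~ has_cycle (color_subgraph g c) l.
Proof.
move=> odd_l lt_lm; apply/negP => /existsP[f /andP[_ /forallP adj_f]].
suff /negP[] : ~~ odd l by [].
apply: (ordS_adj_closed_walk_even (a := fun i => c (f i))) lt_lm => i.
by have := adj_f i; rewrite adj_color_subgraph => /andP[].
Qed.

(* [c |-> (c with each f i recoloured i, c \o f)] is injective and maps into
   (colourings keeping [f]) x (colourings of 'I_m). *)
Lemma card_colorings_keeping_cycle n m (g : graph n) (f : {ffun 'I_m -> 'I_n}) :
  cycle_map g f ->
  m ^ n <= m ^ m * #|[set c : {ffun 'I_n -> 'I_m} |
                       cycle_map (color_subgraph g c) f]|.
Proof.
case/andP => injb_f /forallP adj_f; have /injectiveP inj_f := injb_f.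
pose along_f (c : {ffun 'I_n -> 'I_m}) : {ffun 'I_n -> 'I_m} :=
  [ffun x => if [pick i | f i == x] is Some i then i else c x].
have along_fE c i : along_f c (f i) = i.
  by rewrite ffunE; case: pickP => [j /eqP/inj_f -> | /(_ i)] //; rewrite eqxx.
pose h c := (along_f c, [ffun i => c (f i)]).
have inj_h : injective h.
  move=> c1 c2 [/ffunP E1 /ffunP E2]; apply/ffunP => x.
  move: (E1 x); rewrite !ffunE; case: pickP => [i /eqP <- _ | _ -> //].
  by move: (E2 i); rewrite !ffunE.
set Keep := [set c | _].
have : h @: [set: {ffun 'I_n -> 'I_m}] \subset setX Keep setT.
  apply/subsetP => _ /imsetP[c _ ->]; rewrite !inE andbT.
  rewrite /cycle_map injb_f /=; apply/forallP => i.
  by rewrite adj_color_subgraph !along_fE /ordS_adj eqxx adj_f.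
move/subset_leq_card; rewrite card_imset // cardsX !cardsT !card_ffun !card_ord.
by rewrite mulnC.
Qed.

Lemma averaging (I J : finType) (P : pred I) (R : I -> J -> bool) K :
  0 < #|J| -> (forall i, P i -> #|J| <= K * #|[set j | R i j]|) ->
  exists j, #|[set i | P i]| <= K * #|[set i | P i && R i j]|.
Proof.
move=> J_gt0 dense.
have [j0 maxj0] := eq_bigmax (fun j => #|[set i | P i && R i j]|) J_gt0.
exists j0; rewrite -maxj0; set M := \max_j _.
rewrite -(leq_pmul2l J_gt0) -sum1_card big_distrr /=.
apply: (@leq_trans (K * \sum_(i | P i) #|[set j | R i j]|)).
  by rewrite big_distrr /= big_mkcond [leqRHS]big_mkcond /= leq_sum // => i _;
     rewrite inE; case: ifP => // /dense; rewrite muln1.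
have card_sum (B : {set _}) : #|B| = \sum_x (x \in B : nat).
  by rewrite -sum1_card big_mkcond.
under eq_bigr => i _ do rewrite card_sum.
rewrite mulnCA leq_mul2l (exchange_big_dep predT) //= -sum_nat_const.
apply/orP; right; apply: leq_sum => j _; apply: leq_trans (leq_bigmax j).
by rewrite card_sum big_mkcond leq_sum // => i _; rewrite !inE; case: (P i).
Qed.

Lemma exists_coloring_keeping_cycles n m (g : graph n) : 0 < m ->
  exists c : {ffun 'I_n -> 'I_m},
    #|[set f : {ffun 'I_m -> 'I_n} | cycle_map g f]| <=
    m ^ m * #|[set f : {ffun 'I_m -> 'I_n} | cycle_map (color_subgraph g c) f]|.
Proof.
move=> m_gt0.
have colorings_gt0 : 0 < #|{ffun 'I_n -> 'I_m}|.
  by rewrite card_ffun card_ord expn_gt0 m_gt0.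
have [|c le_c] := @averaging _ _ (@cycle_map n m g)
  (fun f c => cycle_map (color_subgraph g c) f) (m ^ m) colorings_gt0.
  by move=> f /card_colorings_keeping_cycle; rewrite card_ffun !card_ord.
exists c; apply: leq_trans le_c _; rewrite leq_mul2l subset_leq_card ?orbT //.
by apply/subsetP => f; rewrite !inE => /andP[].
Qed.

(* The [2m] rotations and reflections of a traversal [f] are distinct traversals. *)
Lemma card_cycle_maps_ge n m (g : graph n) (f : {ffun 'I_m -> 'I_n}) : 3 <= m ->
  cycle_map g f -> 2 * m <= #|[set f : {ffun 'I_m -> 'I_n} | cycle_map g f]|.
Proof.
case: m f => [|[|[|p]]] // f _ /andP[/injectiveP inj_f /forallP adj_f].
have ordSE (i : 'I_p.+3) : ordS i = (i + 1)%R.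
  by apply: val_inj => /=; rewrite modnDmr addn1.
pose h (x : 'I_p.+3 * bool) : {ffun 'I_p.+3 -> 'I_n} :=
  [ffun i => f (if x.2 then (x.1 + i)%R else (x.1 - i)%R)].
have two_neq0 : (1 + 1 : 'I_p.+3)%R != 0%R by apply/eqP => /(congr1 val).
have inj_h : injective h.
  move=> [j1 b1] [j2 b2] /ffunP E.
  move: (E 0%R) (E 1%R) => {E}; rewrite !ffunE /=.
  case: b1 b2 => [] [] /inj_f + /inj_f; rewrite ?addr0 ?subr0 => <- //.
  - by move/addrI/eqP; rewrite -addr_eq0 (negPf two_neq0).
  - by move/esym/addrI/eqP; rewrite -addr_eq0 (negPf two_neq0).
have : h @: [set: 'I_p.+3 * bool] \subset [set f | cycle_map g f].
  apply/subsetP => _ /imsetP[[j b] _ ->]; rewrite inE /cycle_map.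
  apply/andP; split.
    apply/injectiveP => i1 i2; rewrite !ffunE /=; case: b => /inj_f.
    - exact: addrI.
    - by move/addrI/oppr_inj.
  apply/forallP => i; rewrite !ffunE /=; case: b.
  - by have := adj_f (j + i)%R; rewrite !ordSE addrA.
  - have := adj_f (j - (i + 1))%R; rewrite !ordSE adjC.
    by rewrite opprD addrA subrK.
move/subset_leq_card; rewrite card_imset // cardsT card_prod card_ord card_bool.
by rewrite mulnC.
Qed.

Lemma leq_divn_scaled a b d M : 0 < d -> a <= M * b -> (b = 0 \/ d <= b) ->
  a %/ d <= 2 * M * (b %/ d).
Proof.
move=> d_gt0 le_a_Mb [b0 | le_db].
  by move: le_a_Mb; rewrite b0 muln0 leqn0 => /eqP ->; rewrite div0n.
have := leq_div a d; have := ltn_ceil b d_gt0; have : 0 < b %/ d by rewrite divn_gt0.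
nia.
Qed.

Lemma num_cycles_le_scaled n m (g h : graph n) K : 3 <= m ->
  #|[set f : {ffun 'I_m -> 'I_n} | cycle_map g f]| <=
    K * #|[set f : {ffun 'I_m -> 'I_n} | cycle_map h f]| ->
  num_cycles g m <= 2 * K * num_cycles h m.
Proof.
move=> m_ge3 le_gh; apply: leq_divn_scaled le_gh _; first by lia.
have [-> | /card_gt0P[f]] := posnP #|[set f : {ffun 'I_m -> 'I_n} | cycle_map h f]|.
  by left.
by rewrite inE => /card_cycle_maps_ge -> //; right.
Qed.

Lemma color_subgraph_cycles_free n k (A : pred nat) (g : graph n)
    (c : {ffun 'I_n -> 'I_k.*2.+1}) :
  cycles_free g (setDpred A (odd_below k)) -> cycles_free (color_subgraph g c) A.
Proof.
move=> /forallP freeg; apply/forallP => b; apply/implyP => Ab.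
have [/andP[odd_b lt_b] | not_short] := boolP (odd_below k b).
  exact: color_subgraph_no_short_odd_cycle.
apply: contra (implyP (freeg b) _); last first.
  by move: Ab; rewrite !unfold_in /setDpred => ->.
by case/existsP => f /cycle_map_sub f_cyc; apply/existsP; exists f;
   apply/f_cyc/adj_color_subgraph_sub.
Qed.

Lemma ex_cyc_setD_odd_below_le n k (A : pred nat) : 1 <= k ->
  ex_cyc n k.*2.+1 (setDpred A (odd_below k)) <=
  2 * k.*2.+1 ^ k.*2.+1 * ex_cyc n k.*2.+1 A.
Proof.
move=> k_gt0; apply/bigmax_leqP => g freeg.
have [c le_c] := exists_coloring_keeping_cycles g (ltn0Sn k.*2).
apply: leq_trans (num_cycles_le_scaled _ le_c) _.
  by rewrite ltnS -[2]/(1.*2) leq_double.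
rewrite leq_mul2l leq_bigmax_cond ?orbT //.
exact: color_subgraph_cycles_free.
Qed.

Theorem lemma2 (k : nat) (A : pred nat) :
  1 <= k ->
  (forall b, A b -> 3 <= b) ->
  bigTheta (fun n => ex_cyc n k.*2.+1 A)
           (fun n => ex_cyc n k.*2.+1 (setDpred A (odd_below k))).
Proof.
move=> k_gt0 _; exists (2 * k.*2.+1 ^ k.*2.+1), 0 => n _; split.
- apply: leq_trans (ex_cyc_anti _ _ _) (leq_pmull _ _).
    by move=> b /andP[].
  by rewrite muln_gt0 expn_gt0.
- exact: ex_cyc_setD_odd_below_le.
Qed.
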